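(* Let $\alpha\in\mathbb{Q}(\sqrt2)$ be an algebraic $d$-number whose norm $\mathcal{N}_{\mathbb{Q}(\sqrt2)/\mathbb{Q}}(\alpha)$ is a power of $2$. If every Galois conjugate of $\alpha$ is at least $2$ (i.e.\ $\alpha$ is totally $\geq 2$) and $\alpha-1$ is also an algebraic $d$-number, then $\alpha\in\mathbb{Z}$.
   Context: An algebraic $d$-number is an algebraic integer $\alpha$ such that the ideal generated by $\alpha$ in the ring of all algebraic integers is invariant under $\mathrm{Gal}(\overline{\mathbb{Q}}/\mathbb{Q})$. For $\alpha$ of degree $2$ this is equivalent to $\alpha^2$ being an integer multiple of an algebraic unit, and also to $\mathcal{N}(\alpha)$ dividing $\mathcal{T}(\alpha)^2$, where $\mathcal{N},\mathcal{T}$ are the norm and trace of $\mathbb{Q}(\alpha)/\mathbb{Q}$. Every rational integer is an algebraic $d$-number. *)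

From mathcomp Require Import all_boot all_order all_algebra all_field.
Set Implicit Arguments. Unset Strict Implicit. Unset Printing Implicit Defensive.
Import GRing.Theory Num.Theory.
Local Open Scope ring_scope.

(* We work inside algC, the algebraic closure of Q (a copy of Qbar);
   Gal(Qbar/Q) = the ring automorphisms of algC, i.e. rmorphisms algC -> algC
   (every ring endomorphism of algC is an automorphism fixing Q). *)

Definition princ_ideal (alpha : algC) : algC -> Prop :=
  fun x => exists2 y, y \in Aint & x = alpha * y.

(* Algebraic d-number: an algebraic integer alpha whose ideal alpha*O is
   invariant under every Galois automorphism sigma, i.e. sigma(alpha O) = alpha O. *)
Definition d_number (alpha : algC) : Prop :=
  alpha \in Aint /\
  forall (sigma : {rmorphism algC -> algC}) (x : algC),
    princ_ideal alpha x <-> exists2 z, princ_ideal alpha z & x = sigma z.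

Definition qsqrt2 (a b : rat) : algC := ratr a + ratr b * sqrtC 2.

(* Norm N_{Q(sqrt2)/Q}(a + b sqrt 2) = (a + b sqrt2)(a - b sqrt2) = a^2 - 2 b^2. *)
Definition norm_Qsqrt2 (a b : rat) : rat := a ^+ 2 - 2 * b ^+ 2.

From mathcomp Require Import all_boot all_order all_algebra all_field.
From mathcomp Require Import zify ring.
Set Implicit Arguments.
Unset Strict Implicit.
Unset Printing Implicit Defensive.

Import Order.TTheory GRing.Theory Num.Theory.
Local Open Scope ring_scope.

(* Let sigma be an automorphism of algC with sigma (sqrt 2) = - sqrt 2, and let
   t = x + sigma x and n = x * sigma x be the trace and the norm of x; they are
   rational integers.  If x is a d-number then sigma x = x y and x = sigma x y'
   with y, y' algebraic integers, so (x + sigma x)^2 = x sigma x (y + y' + 2)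
   and n divides t^2; as x - 1 is a d-number, n - t + 1 divides (t - 2)^2 in
   the same way.  Since n divides t^2 it is coprime to t - 1, and comparing the
   two divisibilities shows that n divides c - 4, where
   c (n - t + 1) = (t - 2)^2.  Total positivity x, sigma x >= 2 gives t >= 4
   and 2 t <= n + 4, which leave only c = 4, i.e. t^2 = 4 n: the discriminant
   vanishes, so x = sigma x = t / 2 is rational, hence a rational integer. *)

Lemma sqrt2_conj_aut :
  exists sigma : {rmorphism algC -> algC}, sigma (sqrtC 2) = - sqrtC 2.
Proof.
pose z : algC := 4.-root (-1).
have z4 : z ^+ 4 = -1 by rewrite rootCK.
have z8 : z ^+ 8 = 1 by rewrite (exprM z 4 2) z4 sqrrN expr1n.
have [sigma sigmaX] := Qn_aut_exists (isT : coprime 3 8).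
(* z is a primitive 8th root of unity, z - z^3 a square root of 2 negated by z |-> z^3. *)
pose s := z - z ^+ 3.
have sigma_s : sigma s = - s.
  rewrite rmorphB rmorphXn /= sigmaX // -exprM.
  by rewrite (exprSr z 8) z8 mul1r opprB.
have s2 : s ^+ 2 = 2.
  have -> : s ^+ 2 = z ^+ 2 * (1 + z ^+ 4) - 2 * z ^+ 4 by rewrite /s; ring.
  by rewrite z4 subrr mulr0 sub0r mulrN1 opprK.
have : (sqrtC 2 - s) * (sqrtC 2 + s) = 0 by rewrite -subr_sqr sqrtCK s2 subrr.
move/eqP; rewrite mulf_eq0 subr_eq0 addr_eq0 => /orP[] /eqP ->; exists sigma.
  by rewrite sigma_s.
by rewrite rmorphN sigma_s.
Qed.

Lemma d_number_conj (sigma : {rmorphism algC -> algC}) (x : algC) : d_number x ->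
  exists y y', [/\ y \in Aint, y' \in Aint, sigma x = x * y & x = sigma x * y'].
Proof.
case=> Ax invx.
have x_x : princ_ideal x x by exists 1; rewrite ?Aint1 ?mulr1.
have [y Ay sx] : princ_ideal x (sigma x) by apply/(invx sigma); exists x.
have [_ [w Aw ->] Ex] := (invx sigma x).1 x_x.
by exists y, (sigma w); rewrite Aint_aut -rmorphM -Ex.
Qed.

Lemma d_number_norm_dvd_trace_sqr (sigma : {rmorphism algC -> algC}) (x : algC)
    (t n : int) :
  d_number x -> x + sigma x = t%:~R -> x * sigma x = n%:~R -> n != 0 ->
  (n %| t ^+ 2)%Z.
Proof.
move=> dx Et En n_neq0.
have [y [y' [Ay Ay' Ey Ey']]] := d_number_conj sigma dx.
have trace_sqr : (x + sigma x) ^+ 2 = x * sigma x * (y + y' + 2).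
  have -> : (x + sigma x) ^+ 2 = x * x + sigma x * sigma x + 2 * (x * sigma x) by ring.
  by rewrite {1}Ey' {2}Ey; ring.
have ratio : t%:~R ^+ 2 / n%:~R = y + y' + 2 :> algC.
  by rewrite -Et trace_sqr En mulrC mulKf ?intr_eq0.
have /intrP[m Em] : t%:~R ^+ 2 / n%:~R \in (Num.int : {pred algC}).
  apply: Cint_rat_Aint; first by rewrite rpred_div ?rpredX ?rpred_int.
  by rewrite ratio !rpredD ?Aint_int.
apply/dvdzP; exists m; apply: (@intr_inj algC).
by rewrite rmorphXn intrM -Em mulfVK ?intr_eq0.
Qed.

Lemma coprimez_pred_of_dvd_sqr (n t : int) : (n %| t ^+ 2)%Z -> coprimez n (t - 1).
Proof.
move=> n_dvd; apply: (@coprimez_dvdl `|n| `|t ^+ 2|); first by rewrite -dvdzE.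
suff : coprimez (t ^+ 2) (t - 1) by [].
by apply/coprimezP; exists (1, - (t + 1)) => /=; ring.
Qed.

Lemma trace_sqr_eq_4norm (t n : int) :
  (n %| t ^+ 2)%Z -> (n - t + 1 %| (t - 2) ^+ 2)%Z ->
  4 <= t -> 2 * t <= n + 4 -> t ^+ 2 = 4 * n.
Proof.
move=> n_dvd /dvdzP[c Ec] t_ge4 tn.
have /dvdzP[m Em] := n_dvd.
have : (n %| (c - 4) * (t - 1))%Z by apply/dvdzP; exists (c - m); nia.
rewrite Gauss_dvdzl ?coprimez_pred_of_dvd_sqr // => /dvdzP[e Ee].
have n_ge4 : 4 <= n by lia.
have norm1_gt0 : 0 < n - t + 1 by lia.
have c_gt0 : 0 < c by nia.
have [e_lt0|e_gt0|e0] := ltgtP e 0; nia.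
Qed.

Lemma ge2_sum_mul (R : numDomainType) (x y : R) :
  2 <= x -> 2 <= y -> 4 <= x + y /\ 2 * (x + y) <= x * y + 4.
Proof.
move=> x_ge2 y_ge2; split; first by have := lerD x_ge2 y_ge2; rewrite -natrD.
have : 0 <= (x - 2) * (y - 2) by rewrite mulr_ge0 ?subr_ge0.
by rewrite -subr_ge0; congr (0 <= _); ring.
Qed.

Lemma qsqrt2_conj (a b : rat) (sigma : {rmorphism algC -> algC}) :
  sigma (sqrtC 2) = - sqrtC 2 -> sigma (qsqrt2 a b) = qsqrt2 a (- b).
Proof.
move=> s2; rewrite /qsqrt2 rmorphD (fmorph_rat sigma a) rmorphM (fmorph_rat sigma b).
by rewrite s2 rmorphN mulrN mulNr.
Qed.

Lemma qsqrt2_trace (a b : rat) : qsqrt2 a b + qsqrt2 a (- b) = ratr (a *+ 2).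
Proof. by rewrite /qsqrt2 rmorphN rmorphMn; ring. Qed.

Lemma qsqrt2_norm (a b : rat) : qsqrt2 a b * qsqrt2 a (- b) = ratr (norm_Qsqrt2 a b).
Proof.
rewrite /qsqrt2 /norm_Qsqrt2 rmorphN !(rmorphB, rmorphM, rmorphXn, rmorph_nat) /=.
by rewrite -[X in _ = _ - X * _](sqrtCK 2); ring.
Qed.

Lemma aut_fixed_d_number_ge2 (sigma : {rmorphism algC -> algC}) (x : algC)
    (t n : int) :
  d_number x -> d_number (x - 1) -> 2 <= x -> 2 <= sigma x ->
  x + sigma x = t%:~R -> x * sigma x = n%:~R -> sigma x = x.
Proof.
move=> dx dx1 x_ge2 sx_ge2 Et En.
have [t_ge4 tn] := ge2_sum_mul x_ge2 sx_ge2.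
rewrite Et En in t_ge4 tn.
have {}t_ge4 : 4 <= t by rewrite -(ler_int algC).
have {}tn : 2 * t <= n + 4 by rewrite -(ler_int algC) rmorphD rmorphM.
have Et1 : (x - 1) + sigma (x - 1) = (t - 2)%:~R.
  by rewrite rmorphB rmorph1 intrB -Et; ring.
have En1 : (x - 1) * sigma (x - 1) = (n - t + 1)%:~R.
  by rewrite rmorphB rmorph1 intrD intrB -Et -En; ring.
have n_neq0 : n != 0 by lia.
have n1_neq0 : n - t + 1 != 0 by lia.
have discr0 := trace_sqr_eq_4norm (d_number_norm_dvd_trace_sqr dx Et En n_neq0)
  (d_number_norm_dvd_trace_sqr dx1 Et1 En1 n1_neq0) t_ge4 tn.
apply/eqP; rewrite -subr_eq0 -sqrf_eq0.
have -> : (sigma x - x) ^+ 2 = (x + sigma x) ^+ 2 - 4 * (x * sigma x) by ring.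
have := congr1 (fun z : int => z%:~R : algC) discr0.
by rewrite /= rmorphXn intrM Et En => ->; rewrite subrr.
Qed.

Theorem propositionA4 (a b : rat) :
  d_number (qsqrt2 a b) ->
  (exists k : nat, norm_Qsqrt2 a b = 2 ^+ k) ->
  (forall sigma : {rmorphism algC -> algC}, 2 <= sigma (qsqrt2 a b)) ->
  d_number (qsqrt2 a b - 1) ->
  qsqrt2 a b \in Num.int.
Proof.
move=> dx _ x_ge2 dx1.
have [sigma /(qsqrt2_conj a b) sx] := sqrt2_conj_aut.
set x := qsqrt2 a b in dx x_ge2 dx1 sx *.
have Ax : x \in Aint by case: dx.
have Asx : sigma x \in Aint by rewrite Aint_aut.
have /intrP[t Et] : x + sigma x \in Num.int.
  by apply: Cint_rat_Aint; [rewrite sx qsqrt2_trace Crat_rat | rewrite rpredD].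
have /intrP[n En] : x * sigma x \in Num.int.
  by apply: Cint_rat_Aint; [rewrite sx qsqrt2_norm Crat_rat | rewrite rpredM].
have sx_eq := aut_fixed_d_number_ge2 dx dx1 (x_ge2 idfun) (x_ge2 sigma) Et En.
apply: Cint_rat_Aint => //.
have -> : x = t%:~R / 2 by rewrite -Et sx_eq; field.
by rewrite rpred_div ?rpred_int ?rpred_nat.
Qed.
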